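(* Let $h:\Gamma\to\mathbb{T}A$ be a simple parametrized tropical curve with gcd $\delta_\Gamma$. Then $$\sum_{V\in V(\Gamma)}\frac{m_V}{\delta_\Gamma}\equiv 0\pmod 2.$$
   Context: $N$ is an oriented rank $2$ lattice; $\mathbb{T}A=N_\mathbb{R}/\Lambda$ with $\Lambda$ a full-rank lattice in $N_\mathbb{R}$. A parametrized tropical curve $h:\Gamma\to\mathbb{T}A$ is a map from a compact connected finite metric graph, affine on each edge with slope $u_e=w_eu'_e\in N$ ($u'_e$ primitive, $w_e\in\mathbb{Z}_{>0}$ the weight), balanced at each vertex. It is simple if $\Gamma$ is trivalent and $h$ an immersion. Its gcd $\delta_\Gamma$ is the gcd of the weights of its edges. For a trivalent vertex $V$ with outgoing slopes $a_V,b_V,-a_V-b_V$ (weights included), its multiplicity is $m_V=|\det(a_V,b_V)|$. *)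

From HB Require Import structures.
From mathcomp Require Import all_boot all_order all_algebra.
From mathcomp Require Import reals.
Set Implicit Arguments. Unset Strict Implicit. Unset Printing Implicit Defensive.
Import Order.TTheory GRing.Theory Num.Theory.
Local Open Scope ring_scope.

(* N = Z^2 with its standard orientation; N_R = R^2.  Vectors are pairs. *)
Definition detZ (a b : int * int) : int := a.1 * b.2 - a.2 * b.1.
Definition detR {R : realType} (a b : R * R) : R := a.1 * b.2 - a.2 * b.1.

Definition primitive (u : int * int) : Prop := gcdz u.1 u.2 = 1%N.

Definition in_lattice {R : realType} (lam1 lam2 : R * R) (x : R * R) : Prop :=
  exists m n : int, x = (m%:~R * lam1.1 + n%:~R * lam2.1,
                         m%:~R * lam1.2 + n%:~R * lam2.2).

(* A parametrized tropical curve h : Gamma -> TA = R^2 / Lambda.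
   Gamma: finite graph, vertex set [vert], edges [edge], each edge oriented
   from [src e] to [tgt e] (multi-edges and loops allowed), edge lengths
   [len e] > 0.  h is given by lifts [pos v] in R^2 of the images of the
   vertices; on edge e it is the affine map t |-> pos (src e) + t * u_e
   (t in [0, len e]) mod Lambda, which must close up: pos (tgt e) -
   pos (src e) - len e * u_e in Lambda.  The slope is u_e = wt e * dir e
   with dir e primitive and wt e > 0. *)
Record ptcurve (R : realType) (lam1 lam2 : R * R) := PTCurve {
  vert : finType;
  edge : finType;
  src : edge -> vert;
  tgt : edge -> vert;
  len : edge -> R;
  wt : edge -> nat;
  dir : edge -> int * int;
  pos : vert -> R * R;
  len_pos : forall e, 0 < len e;
  wt_pos : forall e, (0 < wt e)%N;
  dir_prim : forall e, primitive (dir e);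
  closing : forall e,
    in_lattice lam1 lam2
      ((pos (tgt e)).1 - (pos (src e)).1 - len e * ((wt e)%:R * (dir e).1)%:~R,
       (pos (tgt e)).2 - (pos (src e)).2 - len e * ((wt e)%:R * (dir e).2)%:~R);
  connected : forall x y : vert,
    connect (fun a b => [exists e, ((src e == a) && (tgt e == b))
                                   || ((src e == b) && (tgt e == a))]) x y
}.

Section Ops.
Variables (R : realType) (lam1 lam2 : R * R) (C : ptcurve lam1 lam2).

Definition slope (e : edge C) : int * int :=
  ((wt e)%:R * (dir e).1, (wt e)%:R * (dir e).2).

(* half-edges (flags): (e, true) is the end of e at src e, (e, false) the
   end at tgt e. *)
Definition hvert (f : edge C * bool) : vert C :=
  if f.2 then src f.1 else tgt f.1.
Definition hslope (f : edge C * bool) : int * int :=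
  if f.2 then slope f.1 else (- (slope f.1).1, - (slope f.1).2).
Definition hdir (f : edge C * bool) : int * int :=
  if f.2 then dir f.1 else (- (dir f.1).1, - (dir f.1).2).

Definition flags_at (v : vert C) : seq (edge C * bool) :=
  enum [pred f : edge C * bool | hvert f == v].

Definition trivalent : Prop := forall v : vert C, size (flags_at v) = 3%N.

Definition balanced : Prop := forall v : vert C,
  \sum_(f <- flags_at v) (hslope f).1 = 0 /\
  \sum_(f <- flags_at v) (hslope f).2 = 0.

(* h immersion: edges have nonzero slope (automatic) and at every vertex the
   outgoing directions of distinct half-edges are distinct. *)
Definition immersion : Prop := forall f g : edge C * bool,
  hvert f = hvert g -> f <> g -> hdir f <> hdir g.

Definition simple : Prop := trivalent /\ immersion.

Definition vmult (v : vert C) : nat :=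
  match flags_at v with
  | f :: g :: _ => `|detZ (hslope f) (hslope g)|%N
  | _ => 0%N
  end.

Definition gcd_weights : nat := \big[gcdn/0%N]_(e : edge C) wt e.

End Ops.

(* Write q(s) = s1 s2.  At a trivalent balanced vertex with outgoing slopes
   a, b, c = -a-b one has det(a, b) = a1 b2 - a2 b1 = q(a) + q(b) + q(c) mod 2,
   so the sum of all multiplicities is congruent to the sum of q over all
   half-edges.  The two half-edges of an edge carry opposite slopes u, -u and
   q(-u) = q(u), so that sum is even.  Finally delta^2 divides every m_V:
   if delta is odd, sum m_V / delta has the parity of sum m_V, and if delta is
   even every m_V / delta is even.  Neither the lattice nor the immersion
   condition plays a role. *)
From Pilot Require Import Defs.
From HB Require Import structures.
From mathcomp Require Import all_boot all_order all_algebra.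
From mathcomp Require Import reals.
From mathcomp Require Import ring.
Import Order.TTheory GRing.Theory Num.Theory.

Local Open Scope ring_scope.

Definition coord_prod (s : int * int) : int := s.1 * s.2.

Lemma coord_prodN (s : int * int) : coord_prod (- s.1, - s.2) = coord_prod s.
Proof. by rewrite /coord_prod /= mulrNN. Qed.

Lemma dvdz2_abszB (x : int) : (2 %| `|x|%N%:Z - x)%Z.
Proof.
rewrite abszE; have [x_lt0 | x_ge0] := ltrP x 0.
- by rewrite ltr0_norm //; apply/dvdzP; exists (- x); ring.
- by rewrite ger0_norm // subrr dvdz0.
Qed.

(* [detZ] alone would name the matrix lemma [\det (a *: A) = ...]. *)
Lemma dvdz2_detZ_balanced (a b c : int * int) :
  a.1 + b.1 + c.1 = 0 -> a.2 + b.2 + c.2 = 0 ->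
  (2 %| Defs.detZ a b - (coord_prod a + coord_prod b + coord_prod c))%Z.
Proof.
move=> /eqP; rewrite addrC addr_eq0 => /eqP c1E.
move=> /eqP; rewrite addrC addr_eq0 => /eqP c2E.
apply/dvdzP; exists (- (a.1 * a.2 + b.1 * b.2 + a.2 * b.1)).
by rewrite /Defs.detZ /coord_prod c1E c2E; ring.
Qed.

Lemma even_sum_divn (I : finType) (n : I -> nat) (d : nat) :
  (forall i, d * d %| n i)%N -> ~~ odd (\sum_i n i)%N ->
  ~~ odd (\sum_i n i %/ d)%N.
Proof.
move=> sqd_dvd even_sum; have [-> | d_gt0] := posnP d.
  by rewrite big1 // => i _; rewrite divn0.
have d_dvd i : (d %| n i)%N := dvdn_trans (dvdn_mulr d (dvdnn d)) (sqd_dvd i).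
have [d_odd | d_even] := boolP (odd d).
  have sumE : (\sum_i n i = d * \sum_i n i %/ d)%N.
    by rewrite big_distrr; apply: eq_bigr => i _ /=; rewrite mulnC divnK.
  by move: even_sum; rewrite sumE oddM d_odd.
apply: (big_ind (fun m => ~~ odd m)) => // [x y|i _].
  by rewrite oddD => /negbTE-> /negbTE->.
have [k ->] := dvdnP (sqd_dvd i).
by rewrite mulnA mulnK // oddM (negbTE d_even) andbF.
Qed.

Section Curve.
Variables (R : realType) (lam1 lam2 : R * R) (C : ptcurve lam1 lam2).

Lemma sum_flags_at (M : nmodType) (F : edge C * bool -> M) :
  \sum_(v : vert C) \sum_(f <- flags_at v) F f = \sum_(f : edge C * bool) F f.
Proof.
rewrite (partition_big (@hvert _ _ _ C) predT) //=.
by apply: eq_bigr => v _; rewrite /flags_at big_enum /=; apply: eq_bigl => f; rewrite inE.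
Qed.

Lemma sum_coord_prod_hslope :
  \sum_(f : edge C * bool) coord_prod (hslope f)
    = (\sum_(e : edge C) coord_prod (slope e)) *+ 2.
Proof.
rewrite -(pair_big predT predT (fun e b => coord_prod (hslope (e, b)))) /=.
by rewrite -sumrMnl; apply: eq_bigr => e _; rewrite big_bool /= coord_prodN mulr2n.
Qed.

Lemma gcd_weights_dvd_hslope (f : edge C * bool) :
  (gcd_weights C %| (hslope f).1)%Z /\ (gcd_weights C %| (hslope f).2)%Z.
Proof.
have dvd_wt : (gcd_weights C %| (wt f.1)%:R)%Z.
  by rewrite natz dvdzE; apply: (biggcdn_inf f.1).
by case: f dvd_wt => e [] /= dvd_wt; rewrite /slope /= ?rpredN; split; apply: dvdz_mulr.
Qed.

Lemma sqr_gcd_weights_dvd_vmult (v : vert C) :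
  (gcd_weights C * gcd_weights C %| vmult v)%N.
Proof.
rewrite /vmult; case: (flags_at v) => [|f [|g _]] //.
have [f1 f2] := gcd_weights_dvd_hslope f; have [g1 g2] := gcd_weights_dvd_hslope g.
suff : ((gcd_weights C * gcd_weights C)%:Z %| Defs.detZ (hslope f) (hslope g))%Z.
  by rewrite dvdzE.
by rewrite PoszM; apply: rpredB; apply: dvdz_mul.
Qed.

Hypotheses (hbal : balanced C) (htri : trivalent C).

Lemma dvdz2_vmult_flags (v : vert C) :
  (2 %| (vmult v)%:Z - \sum_(f <- flags_at v) coord_prod (hslope f))%Z.
Proof.
have [bal1 bal2] := hbal v; move: (htri v) bal1 bal2; rewrite /vmult.
case: (flags_at v) => [|f [|g [|h [|]]]] //= _.
rewrite !big_cons !big_nil !addr0 !addrA => bal1 bal2.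
set D := Defs.detZ _ _; rewrite -(subrK D (Posz _)) -(addrA (_ - D)).
by apply: rpredD; [exact: dvdz2_abszB | exact: dvdz2_detZ_balanced].
Qed.

Lemma even_sum_vmult : ~~ odd (\sum_(v : vert C) vmult v)%N.
Proof.
suff : (2 %| (\sum_(v : vert C) vmult v)%N%:Z)%Z by rewrite dvdzE /= dvdn2.
rewrite (big_morph Posz PoszD (erefl _)).
rewrite -(subrK (\sum_(v : vert C) \sum_(f <- flags_at v) coord_prod (hslope f))
                (\sum_v (vmult v)%:Z)).
rewrite -sumrB sum_flags_at sum_coord_prod_hslope.
apply: rpredD; first by apply: rpred_sum => v _; exact: dvdz2_vmult_flags.
by rewrite -[_ *+ 2]mulr_natr dvdz_mull.
Qed.

End Curve.

Theorem mainTheorem8 (R : realType) (lam1 lam2 : R * R)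
  (hLam : detR lam1 lam2 != 0%R)
  (C : ptcurve lam1 lam2)
  (hbal : balanced C) (hsimple : simple C) :
  ~~ odd (\sum_(v : vert C) (vmult v %/ gcd_weights C))%N.
Proof.
apply: even_sum_divn; first exact: sqr_gcd_weights_dvd_vmult.
exact: even_sum_vmult hbal hsimple.1.
Qed.
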